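(* Let $u_1,\ldots,u_m$ be a sequence of squarefree monomials of the same degree having linear quotient order. Then any proliferation of this sequence again has linear quotient order.
   Context: A sequence $u_1,\ldots,u_m$ of monomials of the same degree has linear quotient order if the ideal $(u_1,\ldots,u_{j-1}):u_j$ is generated by variables for every $j=2,\ldots,m$. Proliferation: fix a variable $x_i$ and new variables $x_{i1},\ldots,x_{ir}$. For each $j$ with $x_i\mid u_j$ set $u_{jk}=x_{ik}(u_j/x_i)$ for $k=1,\ldots,r$ (i.e. $x_i$ replaced by $x_{ik}$). The proliferation of $u_1,\ldots,u_m$ (with respect to $x_i$ and $x_{i1},\ldots,x_{ir}$) is the sequence obtained from $u_1,\ldots,u_m$ by replacing each $u_j$ divisible by $x_i$ with the consecutive block $u_{j1},\ldots,u_{jr}$, keeping the other $u_j$ unchanged and in place. *)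

(* Monomials in a polynomial ring k[x_v | v : V] over a finite
   set V of variables are represented by their exponent vectors. *)
From mathcomp Require Import all_boot.
Set Implicit Arguments. Unset Strict Implicit. Unset Printing Implicit Defensive.

Definition mon (V : finType) := {ffun V -> nat}.

Definition mmul (V : finType) (u w : mon V) : mon V := [ffun v => u v + w v].

Definition mdvd (V : finType) (u w : mon V) : bool := [forall v, u v <= w v].

Definition mdeg (V : finType) (u : mon V) : nat := \sum_(v : V) u v.

Definition squarefree (V : finType) (u : mon V) : bool := [forall v, u v <= 1].

Definition in_mideal (V : finType) (S : seq (mon V)) (w : mon V) : bool :=
  has (fun g => mdvd g w) S.

Definition in_colon (V : finType) (S : seq (mon V)) (u w : mon V) : bool :=
  in_mideal S (mmul w u).

(* (S) : u is generated by variables: there is a set X of variables such that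
   (S) : u = (x_v | v in X).  Both sides are monomial ideals, hence they are
   equal iff they contain the same monomials. *)
Definition colon_gen_by_vars (V : finType) (S : seq (mon V)) (u : mon V) : Prop :=
  exists X : {set V}, forall w : mon V,
    in_colon S u w = [exists v in X, 0 < w v].

(* linear quotient order: (u_1,...,u_{j-1}) : u_j generated by variables
   for j = 2..m (0-indexed: j = 1 .. size s - 1) *)
Definition linear_quotients (V : finType) (s : seq (mon V)) : Prop :=
  forall j, 0 < j < size s -> colon_gen_by_vars (take j s) (nth [ffun=> 0] s j).

Definition same_degree (V : finType) (s : seq (mon V)) : Prop :=
  forall u w, u \in s -> w \in s -> mdeg u = mdeg w.

(* Proliferation w.r.t. the variable x_i and new variables x_{i1},...,x_{ir}.
   The new polynomial ring has variables V + 'I_r: inl v is the old x_v,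
   inr k is the new variable x_{i,k+1}. *)
Definition membed (V : finType) (r : nat) (u : mon V) : mon (V + 'I_r)%type :=
  [ffun y => match y with inl v => u v | inr _ => 0 end].

(* u_{jk} = x_{ik} (u / x_i) *)
Definition mrepl (V : finType) (i : V) (r : nat) (u : mon V) (k : 'I_r)
  : mon (V + 'I_r)%type :=
  [ffun y => match y with
             | inl v => if v == i then (u v).-1 else u v
             | inr k' => if k' == k then 1 else 0
             end].

Definition proliferation (V : finType) (i : V) (r : nat) (s : seq (mon V))
  : seq (mon (V + 'I_r)%type) :=
  flatten [seq if 0 < u i then [seq mrepl i u k | k <- enum 'I_r]
               else [:: membed r u] | u : mon V <- s].

From mathcomp Require Import all_boot.
From mathcomp Require Import zify.

(* Every member of the proliferated sequence is a lift u_{pk} of some u_p, and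
   its predecessors are the lifts of u_1, ..., u_{p-1} together with its
   siblings u_{pk'}, k' < k.  If a monomial w lies in the colon ideal, some
   predecessor g divides w u_{pk}.  A sibling g = u_{pk'} puts the new
   variable x_{ik'} into the colon ideal and x_{ik'} divides w.  Otherwise g
   lifts an earlier u_q; the colon ideal (u_1, ..., u_{p-1}) : u_p contains
   u_q / gcd(u_q, u_p) and is generated by variables, so some x_y dividing
   u_q / gcd(u_q, u_p) has x_y u_p divisible by an earlier u_{q'}.  Lifting this
   divisibility gives the variable x_y itself, or, when y = i, the new
   variable of g's slot. *)
Set Implicit Arguments. Unset Strict Implicit. Unset Printing Implicit Defensive.

Section ColonIdeals.
Variable V : finType.

Definition mvar (y : V) : mon V := [ffun v => (v == y : nat)].

Lemma mdvdP (u w : mon V) : reflect (forall v, u v <= w v) (mdvd u w).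
Proof. exact: forallP. Qed.

Lemma mvar_dvd (y : V) (w : mon V) : mdvd (mvar y) w = (0 < w y).
Proof.
apply/mdvdP/idP => [/(_ y)|wy v]; first by rewrite ffunE eqxx.
by rewrite ffunE; case: eqP => [->|].
Qed.

Lemma in_colon_dvd (S : seq (mon V)) (u w1 w2 : mon V) :
  mdvd w1 w2 -> in_colon S u w1 -> in_colon S u w2.
Proof.
move=> /mdvdP w12 /hasP [g Sg /mdvdP gw1]; apply/hasP; exists g => //.
by apply/mdvdP => v; move: (gw1 v) (w12 v); rewrite !ffunE; lia.
Qed.

Lemma colon_gen_by_varsP (S : seq (mon V)) (u : mon V) :
  colon_gen_by_vars S u <->
  forall w, in_colon S u w -> exists2 y, 0 < w y & in_colon S u (mvar y).
Proof.
split=> [[X SX] w | Svar].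
  rewrite SX => /existsP [y /andP [Xy wy]]; exists y => //.
  by rewrite SX; apply/existsP; exists y; rewrite Xy ffunE eqxx.
exists [set y | in_colon S u (mvar y)] => w.
apply/idP/existsP => [/Svar [y wy Sy] | [y /andP [Sy wy]]].
  by exists y; rewrite inE Sy.
by rewrite inE in Sy; apply: in_colon_dvd Sy; rewrite mvar_dvd.
Qed.

Lemma colon_gen_by_vars_nil (u : mon V) : colon_gen_by_vars [::] u.
Proof. by exists set0 => w; apply/esym/existsP => -[y]; rewrite inE. Qed.

End ColonIdeals.

Section Proliferation.
Variables (V : finType) (i : V) (r : nat).
Implicit Types (u a b up uq : mon V) (s S : seq (mon V)) (k : 'I_r).
Implicit Types (g w : mon (V + 'I_r)%type).

Definition mlift k u : mon (V + 'I_r)%type :=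
  if 0 < u i then mrepl i u k else membed r u.

Lemma mlift_inl k u v : v != i -> mlift k u (inl v) = u v.
Proof. by move=> /negbTE vi; rewrite /mlift; case: ifP; rewrite ffunE ?vi. Qed.

Lemma mlift_inr k k' u : mlift k u (inr k') = (0 < u i) && (k' == k).
Proof. by rewrite /mlift; case: ifP; rewrite ffunE //; case: eqP. Qed.

Lemma mlift_free k k' u : u i = 0 -> mlift k u = mlift k' u.
Proof. by rewrite /mlift => ->. Qed.

Lemma mlift_dvd_inl k a b (y : V) : y != i ->
  mdvd a (mmul (mvar y) b) -> mdvd (mlift k a) (mmul (mvar (inl y)) (mlift k b)).
Proof.
move=> /negbTE yi /mdvdP ab; apply/mdvdP => -[v|k']; rewrite !ffunE /=; last first.
  by rewrite !mlift_inr; move: (ab i); rewrite !ffunE eq_sym yi; lia.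
have := ab v; have := ab i; rewrite /mlift !ffunE eq_sym yi.
by case: ifP; case: ifP; rewrite !ffunE (inj_eq inl_inj);
  case: (v =P i) => [->|]; rewrite ?(eq_sym i) ?yi; lia.
Qed.

Lemma mlift_dvd_inr k a b : b i = 0 ->
  mdvd a (mmul (mvar i) b) -> mdvd (mlift k a) (mmul (mvar (inr k)) (mlift k b)).
Proof.
move=> bi /mdvdP ab; apply/mdvdP => -[v|k']; rewrite !ffunE /=.
  have := ab v; have := ab i; rewrite /mlift bi !ffunE eqxx /=.
  by case: ifP; rewrite !ffunE; case: (v =P i) => [->|]; lia.
by rewrite !mlift_inr bi (inj_eq inr_inj); case: (0 < a i); case: (k' == k).
Qed.

Lemma mlift_dvd_swap k k' u : mdvd (mlift k' u) (mmul (mvar (inr k')) (mlift k u)).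
Proof.
apply/mdvdP => -[v|k'']; rewrite !ffunE /=; last first.
  by rewrite !mlift_inr (inj_eq inr_inj); case: (0 < u i); case: (k'' == k').
by rewrite /mlift; case: ifP; rewrite !ffunE.
Qed.

Definition prol_block u : seq (mon (V + 'I_r)%type) :=
  if 0 < u i then [seq mrepl i u k | k <- enum 'I_r] else [:: membed r u].

Lemma proliferation_cons u s :
  proliferation i r (u :: s) = prol_block u ++ proliferation i r s.
Proof. by []. Qed.

Lemma mlift_mem_prol_block k u : mlift k u \in prol_block u.
Proof.
rewrite /prol_block /mlift; case: ifP => _; last exact: mem_head.
by apply: map_f; rewrite mem_enum.
Qed.

Lemma mlift_mem_proliferation k u s : u \in s -> mlift k u \in proliferation i r s.
Proof.
move=> su; apply/flattenP; exists (prol_block u); last exact: mlift_mem_prol_block.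
exact: (map_f prol_block).
Qed.

Lemma take_proliferation s j : j < size (proliferation i r s) ->
  exists p t, [/\ p < size s, t < size (prol_block (nth [ffun=> 0] s p)),
    take j (proliferation i r s) =
      proliferation i r (take p s) ++ take t (prol_block (nth [ffun=> 0] s p)) &
    nth [ffun=> 0] (proliferation i r s) j =
      nth [ffun=> 0] (prol_block (nth [ffun=> 0] s p)) t].
Proof.
elim: s j => [|u s IHs] j //; rewrite proliferation_cons size_cat => j_lt.
case: (ltnP j (size (prol_block u))) => j_block.
  by exists 0, j; rewrite take_cat nth_cat j_block.
have [|p [t [p_lt t_lt take_j nth_j]]] := IHs (j - size (prol_block u)).
  by rewrite ltn_subLR.
exists p.+1, t; split=> //.
  by rewrite take_cat ltnNge j_block /= take_j proliferation_cons catA.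
by rewrite nth_cat ltnNge j_block /= nth_j.
Qed.

Hypothesis r_gt0 : 0 < r.

Lemma prol_blockP g u : g \in prol_block u -> exists k, g = mlift k u.
Proof.
rewrite /prol_block /mlift; case: ifP => _; first by move=> /mapP [k _ ->]; exists k.
by rewrite mem_seq1 => /eqP ->; exists (Ordinal r_gt0).
Qed.

Lemma proliferationP g s :
  g \in proliferation i r s -> exists2 u, u \in s & exists k, g = mlift k u.
Proof. by move=> /flattenP [b /mapP [u su ->] /prol_blockP]; exists u. Qed.

Lemma nth_prol_block u t : t < size (prol_block u) ->
  exists k, nth [ffun=> 0] (prol_block u) t = mlift k u /\
    forall g, g \in take t (prol_block u) ->
      0 < u i /\ exists2 k', k' != k & g = mlift k' u.
Proof.
rewrite /prol_block; case: ifP => ui; last first.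
  by case: t => // _; exists (Ordinal r_gt0); split; rewrite /mlift ?ui.
rewrite size_map size_enum_ord => t_lt_r.
have nth_t : nth (Ordinal t_lt_r) (enum 'I_r) t = Ordinal t_lt_r.
  by apply: val_inj; rewrite /= nth_enum_ord.
exists (Ordinal t_lt_r); rewrite (nth_map (Ordinal t_lt_r)) ?size_enum_ord // nth_t.
split; first by rewrite /mlift ui.
move=> g; rewrite -map_take => /mapP [k' k'_lt ->]; split=> //; exists k'.
  have : val k' \in take t (iota 0 r) by rewrite -val_enum_ord -map_take map_f.
  by rewrite take_iota mem_iota; apply: contraTneq => ->; rewrite /=; lia.
by rewrite /mlift ui.
Qed.

Lemma colon_var_sibling P u k k' w : 0 < u i -> k' != k ->
  mlift k' u \in P -> mdvd (mlift k' u) (mmul w (mlift k u)) ->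
  exists2 y, 0 < w y & in_colon P (mlift k u) (mvar y).
Proof.
move=> ui /negbTE k'k P_k' /mdvdP k'_dvd; exists (inr k').
  by move: (k'_dvd (inr k')); rewrite ffunE !mlift_inr ui eqxx k'k /=; lia.
by apply/hasP; exists (mlift k' u) => //; apply: mlift_dvd_swap.
Qed.

Lemma colon_var_earlier S up uq k k' w :
  colon_gen_by_vars S up -> uq \in S -> uq i <= 1 ->
  mdvd (mlift k' uq) (mmul w (mlift k up)) ->
  exists2 y, 0 < w y & in_colon (proliferation i r S) (mlift k up) (mvar y).
Proof.
move=> /colon_gen_by_varsP S_vars S_uq uq_sqf /mdvdP uq_dvd.
have [y0 y0_pos /hasP [uq' S_uq' uq'_dvd]] :
    exists2 y0, 0 < [ffun v => uq v - up v] y0 & in_colon S up (mvar y0).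
  apply: S_vars; apply/hasP; exists uq => //.
  by apply/mdvdP => v; rewrite !ffunE; lia.
rewrite ffunE in y0_pos.
case: (eqVneq y0 i) => [y0i | y0i].
  move: y0_pos uq'_dvd; rewrite y0i => y0_pos uq'_dvd.
  (* squarefreeness: x_i divides uq exactly once, so the lift of uq keeps x_{ik'} *)
  have up_i : up i = 0 by lia.
  have uq_i : uq i = 1 by lia.
  rewrite (mlift_free k k' up_i) in uq_dvd *; exists (inr k').
    by move: (uq_dvd (inr k')); rewrite ffunE !mlift_inr uq_i up_i eqxx /=; lia.
  apply/hasP; exists (mlift k' uq'); first exact: mlift_mem_proliferation.
  exact: mlift_dvd_inr.
exists (inl y0).
  by move: (uq_dvd (inl y0)); rewrite ffunE !mlift_inl //; lia.
apply/hasP; exists (mlift k uq'); first exact: mlift_mem_proliferation.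
exact: mlift_dvd_inl.
Qed.

Lemma colon_gen_by_vars_proliferation S u k B :
  (forall q, q \in S -> q i <= 1) -> colon_gen_by_vars S u ->
  (forall g, g \in B -> 0 < u i /\ exists2 k', k' != k & g = mlift k' u) ->
  colon_gen_by_vars (proliferation i r S ++ B) (mlift k u).
Proof.
move=> S_sqf S_vars B_siblings; apply/colon_gen_by_varsP => w.
move=> /hasP [g]; rewrite mem_cat => /orP [P_g | B_g] g_dvd.
  have [uq S_uq [k' g_def]] := proliferationP P_g.
  rewrite g_def in g_dvd.
  have [y wy P_y] := colon_var_earlier S_vars S_uq (S_sqf _ S_uq) g_dvd.
  by exists y => //; move: P_y; rewrite /in_colon /in_mideal has_cat => ->.
have [ui [k' k'k g_def]] := B_siblings g B_g.
rewrite g_def in B_g g_dvd.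
by apply: colon_var_sibling ui k'k _ g_dvd; rewrite mem_cat B_g orbT.
Qed.

End Proliferation.

Theorem lemma5p1 (V : finType) (s : seq (mon V)) (i : V) (r : nat) :
  0 < r ->
  (forall u, u \in s -> squarefree u) ->
  same_degree s ->
  linear_quotients s ->
  linear_quotients (proliferation i r s).
Proof.
move=> r_gt0 s_sqf _ s_lq j /andP [j_gt0 j_lt].
have [p [t [p_lt t_lt -> ->]]] := take_proliferation j_lt.
have [k [-> B_siblings]] := nth_prol_block r_gt0 t_lt.
apply: colon_gen_by_vars_proliferation B_siblings => //.
  by move=> q /mem_take /s_sqf /forallP.
have [-> | p_gt0] := posnP p; first by rewrite take0; apply: colon_gen_by_vars_nil.
by apply: s_lq; rewrite p_gt0 p_lt.
Qed.
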